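(* Let $k\ge2$ be an integer, $0\le\alpha\le1$, $N\ge2$, $X\ge1$, and let $a_1,\dots,a_N$ be complex numbers. Writing $e(x)=e^{2\pi ix}$, \[ \int_X^{2X}x^\alpha\Big|\sum_{1\le n\le N}a_n\,e(k\sqrt[k]{nx})\Big|^2dx=\sum_{1\le n\le N}|a_n|^2\cdot\Big(\frac{2^{1+\alpha}-1}{1+\alpha}X^{1+\alpha}+O\big(X^{1+\alpha-\frac1k}N^{1-\frac1k}\log N\big)\Big). \]
   Context: The implied constant may depend on $k$ and $\alpha$ but not on $X$, $N$ or the $a_n$. *)

From Stdlib Require Import Reals.
From Coquelicot Require Export Coquelicot.
Open Scope R_scope.

Definition e_ (x : R) : C := (cos (2 * PI * x), sin (2 * PI * x)).

Definition kroot (k : nat) (y : R) : R := Rpower y (/ INR k).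

Definition expsum (k N : nat) (a : nat -> C) (x : R) : C :=
  sum_n_m (fun n => Cmult (a n) (e_ (INR k * kroot k (INR n * x)))) 1 N.

Definition l2mass (N : nat) (a : nat -> C) : R :=
  sum_n_m (fun n => (Cmod (a n)) ^ 2) 1 N.

(* Expanding the square, x^alpha |S(x)|^2 is the sum over pairs (m, n) of
   x^alpha Re(a_m conj(a_n) e(k (m^(1/k) - n^(1/k)) x^(1/k))).  The diagonal pairs give the
   main term exactly.  For m <> n one integration by parts (the first-derivative test for the
   phase c x^(1/k)) bounds the integral by X^(1+alpha-1/k) |a_m a_n| / |m^(1/k) - n^(1/k)|, and
   the mean value theorem gives |m^(1/k) - n^(1/k)| >= |m - n| N^(1/k-1) / k.  It remains to use
   |a_m a_n| <= (|a_m|^2 + |a_n|^2) / 2 and sum_(n <> m) 1/|m - n| = O(log N). *)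

From Stdlib Require Import Reals Lra Lia.
From Coquelicot Require Import Coquelicot.
Open Scope R_scope.

Lemma sum_n_m_Rext (a b : nat -> R) n m :
  (forall i, (n <= i <= m)%nat -> a i = b i) -> sum_n_m a n m = sum_n_m b n m.
Proof. exact (sum_n_m_ext_loc a b n m). Qed.

Lemma sum_n_m_Rplus (a b : nat -> R) n m :
  sum_n_m (fun i => a i + b i) n m = sum_n_m a n m + sum_n_m b n m.
Proof. exact (sum_n_m_plus a b n m). Qed.

Lemma sum_n_m_Rmult_l (c : R) (a : nat -> R) n m :
  sum_n_m (fun i => c * a i) n m = c * sum_n_m a n m.
Proof. exact (sum_n_m_mult_l c a n m). Qed.

Lemma sum_n_m_Rminus (a b : nat -> R) n m :
  sum_n_m (fun i => a i - b i) n m = sum_n_m a n m - sum_n_m b n m :> R.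
Proof.
  rewrite (sum_n_m_Rext _ (fun i => a i + -1 * b i)) by (intros; ring).
  rewrite sum_n_m_Rplus, sum_n_m_Rmult_l. ring.
Qed.

Lemma sum_n_m_Rabs_le (a : nat -> R) n m :
  Rabs (sum_n_m a n m) <= sum_n_m (fun i => Rabs (a i)) n m.
Proof. exact (norm_sum_n_m a n m). Qed.

Lemma sum_n_m_le_loc (a b : nat -> R) n m :
  (forall i, (n <= i <= m)%nat -> a i <= b i) -> sum_n_m a n m <= sum_n_m b n m.
Proof.
  induction m as [|m IHm]; intros Hab.
  - destruct n.
    + rewrite !sum_n_n. apply Hab. lia.
    + rewrite !sum_n_m_zero by lia. apply Rle_refl.
  - destruct (Compare_dec.le_lt_dec n (S m)).
    + rewrite !sum_n_Sm by lia. apply Rplus_le_compat.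
      * apply IHm. intros; apply Hab; lia.
      * apply Hab; lia.
    + rewrite !sum_n_m_zero by lia. apply Rle_refl.
Qed.

Lemma sum_n_m_1_S {G : AbelianMonoid} (a : nat -> G) N :
  sum_n_m a 1 (S N) = plus (sum_n_m a 1 N) (a (S N)).
Proof. apply sum_n_Sm. lia. Qed.

Lemma sum_n_m_1_S_R (a : nat -> R) N : sum_n_m a 1 (S N) = sum_n_m a 1 N + a (S N).
Proof. exact (sum_n_m_1_S a N). Qed.

Lemma sum_n_m_1_delta (c : R) m N : (1 <= m <= N)%nat ->
  sum_n_m (fun n => if Nat.eq_dec n m then c else 0) 1 N = c.
Proof.
  induction N as [|N IHN]; intros Hm; [lia|].
  rewrite sum_n_m_1_S. destruct (Nat.eq_dec (S N) m) as [<-|Hne].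
  - rewrite (sum_n_m_ext_loc _ (fun _ => zero)), sum_n_m_const_zero.
    + apply plus_zero_l.
    + intros i Hi. destruct (Nat.eq_dec i (S N)); [lia | reflexivity].
  - rewrite IHN by lia. apply Rplus_0_r.
Qed.

Lemma sum_n_m_1_swap (f : nat -> nat -> R) M N :
  sum_n_m (fun m => sum_n_m (fun n => f m n) 1 N) 1 M
  = sum_n_m (fun n => sum_n_m (fun m => f m n) 1 M) 1 N.
Proof.
  induction M as [|M IHM].
  - rewrite sum_n_m_zero by lia. symmetry.
    rewrite (sum_n_m_ext _ (fun _ => zero)), sum_n_m_const_zero; [reflexivity|].
    intros; apply sum_n_m_zero; lia.
  - rewrite sum_n_m_1_S, IHM, <- sum_n_m_plus.
    apply sum_n_m_ext; intros. symmetry. apply sum_n_m_1_S.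
Qed.

Lemma Rmult_sum_n_m_1 (a b : nat -> R) N :
  sum_n_m a 1 N * sum_n_m b 1 N = sum_n_m (fun m => sum_n_m (fun n => a m * b n) 1 N) 1 N.
Proof.
  rewrite <- (sum_n_m_mult_r (K := R_Ring)). apply sum_n_m_ext; intros m.
  symmetry. apply (sum_n_m_mult_l (K := R_Ring)).
Qed.

Lemma sum_n_m_1_telescope (phi : R -> R) N :
  sum_n_m (fun n => phi (INR n) - phi (INR n - 1)) 1 N = phi (INR N) - phi 0 :> R.
Proof.
  induction N as [|N IHN].
  - rewrite sum_n_m_zero by lia. simpl INR. symmetry. apply Rminus_diag.
  - rewrite sum_n_m_1_S_R, IHN, S_INR.
    replace (INR N + 1 - 1) with (INR N) by ring. ring.
Qed.

Lemma fst_sum_n_m_1 (z : nat -> C) N : fst (sum_n_m z 1 N) = sum_n_m (fun i => fst (z i)) 1 N.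
Proof.
  induction N as [|N IHN].
  - rewrite !sum_n_m_zero by lia. reflexivity.
  - rewrite !sum_n_m_1_S. simpl. rewrite IHN. reflexivity.
Qed.

Lemma snd_sum_n_m_1 (z : nat -> C) N : snd (sum_n_m z 1 N) = sum_n_m (fun i => snd (z i)) 1 N.
Proof.
  induction N as [|N IHN].
  - rewrite !sum_n_m_zero by lia. reflexivity.
  - rewrite !sum_n_m_1_S. simpl. rewrite IHN. reflexivity.
Qed.

Lemma is_RInt_sum_n_m_1 (f : nat -> R -> R) (l : nat -> R) a b N :
  (forall i, (1 <= i <= N)%nat -> is_RInt (f i) a b (l i)) ->
  is_RInt (fun x => sum_n_m (fun i => f i x) 1 N) a b (sum_n_m l 1 N).
Proof.
  induction N as [|N IHN]; intros Hf.
  - rewrite sum_n_m_zero by lia.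
    apply (is_RInt_ext (fun _ => zero)); [intros; symmetry; apply sum_n_m_zero; lia|].
    pose proof (is_RInt_const (V := R_NormedModule) a b zero) as H0.
    rewrite (scal_zero_r (V := R_NormedModule)) in H0. exact H0.
  - rewrite sum_n_m_1_S.
    apply (is_RInt_ext (fun x => plus (sum_n_m (fun i => f i x) 1 N) (f (S N) x))).
    + intros; symmetry; apply sum_n_m_1_S.
    + apply (is_RInt_plus (V := R_NormedModule)); [apply IHN; intros|]; apply Hf; lia.
Qed.

Lemma sum_n_m_1_pair_sym_le (b : nat -> R) (w : nat -> nat -> R) (B : R) N :
  (forall m n, w m n = w n m) -> (forall m, 0 <= b m) ->
  (forall m, (1 <= m <= N)%nat -> sum_n_m (fun n => w m n) 1 N <= B) ->
  sum_n_m (fun m => sum_n_m (fun n => (b m + b n) * w m n) 1 N) 1 N <= 2 * B * sum_n_m b 1 N.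
Proof.
  intros Hsym Hb HB.
  assert (Hhalf : sum_n_m (fun m => sum_n_m (fun n => b n * w m n) 1 N) 1 N
                  = sum_n_m (fun m => sum_n_m (fun n => b m * w m n) 1 N) 1 N).
  { rewrite sum_n_m_1_swap. apply sum_n_m_Rext; intros m _.
    apply sum_n_m_Rext; intros n _. rewrite Hsym. reflexivity. }
  rewrite (sum_n_m_Rext _ (fun m => sum_n_m (fun n => b m * w m n) 1 N
                                    + sum_n_m (fun n => b n * w m n) 1 N)).
  2:{ intros m _. rewrite <- sum_n_m_Rplus. apply sum_n_m_Rext; intros; ring. }
  rewrite sum_n_m_Rplus, Hhalf.
  enough (sum_n_m (fun m => sum_n_m (fun n => b m * w m n) 1 N) 1 N <= B * sum_n_m b 1 N) by lra.
  rewrite <- sum_n_m_Rmult_l. apply sum_n_m_le_loc; intros m Hm.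
  rewrite sum_n_m_Rmult_l, (Rmult_comm B). apply Rmult_le_compat_l; [apply Hb | apply HB, Hm].
Qed.

Lemma is_derive_Rpower r x : 0 < x -> is_derive (fun y => Rpower y r) x (r * Rpower x (r - 1)).
Proof. intros Hx. apply is_derive_Reals. now apply derivable_pt_lim_power. Qed.

Lemma ex_derive_Rpower r x : 0 < x -> ex_derive (fun y => Rpower y r) x.
Proof. intros Hx. eexists. now apply is_derive_Rpower. Qed.

Lemma Derive_Rpower r x : 0 < x -> Derive (fun y => Rpower y r) x = r * Rpower x (r - 1).
Proof. intros Hx. apply is_derive_unique. now apply is_derive_Rpower. Qed.

Lemma RInt_ext_R (f g : R -> R) a b :
  (forall x, Rmin a b < x < Rmax a b -> f x = g x) -> RInt f a b = RInt g a b.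
Proof. exact (RInt_ext f g a b). Qed.

Lemma is_RInt_Rpower al a b : 0 < a <= b -> 1 + al <> 0 ->
  is_RInt (fun x => Rpower x al) a b ((Rpower b (1 + al) - Rpower a (1 + al)) / (1 + al)).
Proof.
  intros Hab Hal.
  replace ((Rpower b (1 + al) - Rpower a (1 + al)) / (1 + al))
    with (minus (/ (1 + al) * Rpower b (1 + al)) (/ (1 + al) * Rpower a (1 + al)))
    by (unfold minus, plus, opp; simpl; field; exact Hal).
  apply (is_RInt_derive (fun x => / (1 + al) * Rpower x (1 + al)));
    rewrite Rmin_left, Rmax_right by lra; intros x Hx.
  - auto_derive; [apply ex_derive_Rpower; lra|].
    rewrite Derive_Rpower by lra. replace (1 + al - 1) with al by ring. field. exact Hal.
  - apply (ex_derive_continuous (V := R_NormedModule)). apply ex_derive_Rpower. lra.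
Qed.

Section IntegrationByParts.

Variables (u u' v v' : R -> R) (a b : R).
Hypothesis Hab : a <= b.
Hypothesis Hderiv : forall x, a <= x <= b ->
  is_derive u x (u' x) /\ is_derive v x (v' x) /\ continuous u' x /\ continuous v' x.

Let Hcont_u x : a <= x <= b -> continuous u x.
Proof. intros Hx. apply (ex_derive_continuous (V := R_NormedModule)). eexists. apply Hderiv, Hx. Qed.

Let Hcont_v x : a <= x <= b -> continuous v x.
Proof. intros Hx. apply (ex_derive_continuous (V := R_NormedModule)). eexists. apply Hderiv, Hx. Qed.

Lemma ex_RInt_derive_mul : ex_RInt (fun x => u' x * v x) a b.
Proof.
  apply (ex_RInt_continuous (V := R_CompleteNormedModule)).
  rewrite Rmin_left, Rmax_right by lra. intros x Hx.
  apply (continuous_mult (K := R_AbsRing)); [apply Hderiv | apply Hcont_v]; exact Hx.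
Qed.

Lemma RInt_mul_derive :
  RInt (fun x => u x * v' x) a b = u b * v b - u a * v a - RInt (fun x => u' x * v x) a b.
Proof.
  assert (Hparts : is_RInt (fun x => u' x * v x + u x * v' x) a b (u b * v b - u a * v a)).
  { apply (is_RInt_derive (fun x => u x * v x)); rewrite Rmin_left, Rmax_right by lra;
      intros x Hx; destruct (Hderiv x Hx) as (Hu & Hv & Hu' & Hv').
    - apply (is_derive_mult (K := R_AbsRing)); [exact Hu | exact Hv | ].
      intros; apply Rmult_comm.
    - apply (continuous_plus (V := R_NormedModule));
        apply (continuous_mult (K := R_AbsRing)); auto using Hcont_u, Hcont_v. }
  rewrite <- (is_RInt_unique _ _ _ _ Hparts).
  rewrite (RInt_ext (fun x => u x * v' x) (fun x => minus (u' x * v x + u x * v' x) (u' x * v x)))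
    by (intros; unfold minus, plus, opp; simpl; ring).
  rewrite (RInt_minus (V := R_CompleteNormedModule)).
  - reflexivity.
  - eexists; exact Hparts.
  - exact ex_RInt_derive_mul.
Qed.

(* Bounding [|v| <= M] on the boundary term and against [u' >= 0] inside the integral
   makes the bound telescope to [M (u b + u a) + M (u b - u a)]. *)
Lemma abs_RInt_mul_derive_le (M : R) :
  (forall x, a <= x <= b -> 0 <= u' x /\ Rabs (v x) <= M) -> 0 <= u a ->
  Rabs (RInt (fun x => u x * v' x) a b) <= 2 * M * u b.
Proof.
  intros Hbound Hua.
  assert (Hu'_int : is_RInt u' a b (u b - u a)).
  { apply (is_RInt_derive u u'); rewrite Rmin_left, Rmax_right by lra; apply Hderiv. }
  assert (Hu_incr : u a <= u b).
  { assert (0 <= RInt u' a b).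
    { apply RInt_ge_0; [lra | eexists; exact Hu'_int | intros; apply Hbound; lra]. }
    rewrite (is_RInt_unique _ _ _ _ Hu'_int) in H. lra. }
  assert (HM : 0 <= M) by (apply Rle_trans with (Rabs (v a)); [apply Rabs_pos | apply Hbound; lra]).
  assert (HMu' : is_RInt (fun x => M * u' x) a b (M * (u b - u a)))
    by (apply (is_RInt_scal (V := R_NormedModule)); exact Hu'_int).
  assert (HMu'_opp : is_RInt (fun x => - (M * u' x)) a b (- (M * (u b - u a))))
    by (apply (is_RInt_opp (V := R_NormedModule)); exact HMu').
  assert (Hpoint : forall x, a < x < b -> Rabs (u' x * v x) <= M * u' x).
  { intros x Hx. destruct (Hbound x ltac:(lra)) as [Hu' Hv].
    rewrite Rabs_mult, Rabs_pos_eq by exact Hu'. rewrite Rmult_comm.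
    apply Rmult_le_compat_r; assumption. }
  assert (Hinner : Rabs (RInt (fun x => u' x * v x) a b) <= M * (u b - u a)).
  { apply Rabs_le. split.
    - rewrite <- (is_RInt_unique _ _ _ _ HMu'_opp).
      apply RInt_le; [lra | eexists; exact HMu'_opp | exact ex_RInt_derive_mul |].
      intros x Hx. specialize (Hpoint x Hx).
      pose proof (Rle_abs (u' x * v x)). pose proof (Rabs_maj2 (u' x * v x)). lra.
    - rewrite <- (is_RInt_unique _ _ _ _ HMu').
      apply RInt_le; [lra | exact ex_RInt_derive_mul | eexists; exact HMu' |].
      intros x Hx. specialize (Hpoint x Hx).
      pose proof (Rle_abs (u' x * v x)). pose proof (Rabs_maj2 (u' x * v x)). lra. }
  assert (Hend : forall x, a <= x <= b -> 0 <= u x -> Rabs (u x * v x) <= M * u x).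
  { intros x Hx Hux. rewrite Rabs_mult, Rabs_pos_eq by exact Hux. rewrite Rmult_comm.
    apply Rmult_le_compat_r; [exact Hux | apply Hbound, Hx]. }
  rewrite RInt_mul_derive.
  pose proof (Hend b ltac:(lra) ltac:(lra)). pose proof (Hend a ltac:(lra) Hua).
  pose proof (Rabs_triang (u b * v b - u a * v a) (- RInt (fun x => u' x * v x) a b)).
  pose proof (Rabs_triang (u b * v b) (- (u a * v a))).
  rewrite Rabs_Ropp in *. unfold Rminus in *. lra.
Qed.

End IntegrationByParts.

(* Writing [x^al cos(c x^g + s) = x^(1+al-g) * (d/dx) (sin (c x^g + s) / (c g))],
   this is the first-derivative test for the phase [c x^g]. *)
Lemma abs_RInt_Rpower_cos_le (al g c s a b : R) :
  0 < a <= b -> 0 < g -> 0 <= 1 + al - g -> c <> 0 ->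
  Rabs (RInt (fun x => Rpower x al * cos (c * Rpower x g + s)) a b)
  <= 2 * Rpower b (1 + al - g) / Rabs (c * g).
Proof.
  intros Hab Hg Hbe Hc.
  set (be := 1 + al - g) in *.
  assert (Hcg : c * g <> 0) by (apply Rmult_integral_contrapositive; split; lra).
  rewrite (RInt_ext_R _ (fun x => Rpower x be * (Rpower x (g - 1) * cos (c * Rpower x g + s)))).
  2:{ rewrite Rmin_left, Rmax_right by lra. intros x Hx.
      rewrite <- Rmult_assoc, <- Rpower_plus. f_equal. f_equal. unfold be; ring. }
  replace (2 * Rpower b be / Rabs (c * g)) with (2 * / Rabs (c * g) * Rpower b be)
    by (unfold Rdiv; ring).
  apply (abs_RInt_mul_derive_le (fun x => Rpower x be) (fun x => be * Rpower x (be - 1))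
           (fun x => sin (c * Rpower x g + s) / (c * g))
           (fun x => Rpower x (g - 1) * cos (c * Rpower x g + s)));
    [lra | intros x Hx; split; [|split; [|split]] | intros x Hx; split | apply Rlt_le, exp_pos].
  - apply is_derive_Rpower. lra.
  - auto_derive; [apply ex_derive_Rpower; lra|].
    rewrite Derive_Rpower by lra. field. split; lra.
  - apply (ex_derive_continuous (V := R_NormedModule)).
    auto_derive. apply ex_derive_Rpower. lra.
  - apply (ex_derive_continuous (V := R_NormedModule)).
    auto_derive. repeat split; apply ex_derive_Rpower; lra.
  - apply Rmult_le_pos; [exact Hbe | apply Rlt_le, exp_pos].
  - unfold Rdiv. rewrite Rabs_mult, Rabs_inv.
    pose proof (Rinv_0_lt_compat _ (Rabs_pos_lt _ Hcg)).
    assert (Rabs (sin (c * Rpower x g + s)) <= 1) by apply Rabs_le, SIN_bound.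
    nra.
Qed.

Lemma ex_RInt_Rpower_cos (al g c s a b : R) : 0 < a <= b ->
  ex_RInt (fun x => Rpower x al * cos (c * Rpower x g + s)) a b.
Proof.
  intros Hab. apply (ex_RInt_continuous (V := R_CompleteNormedModule)).
  rewrite Rmin_left, Rmax_right by lra. intros x Hx.
  apply (ex_derive_continuous (V := R_NormedModule)).
  auto_derive. repeat split; apply ex_derive_Rpower; lra.
Qed.

(* Both components are written as [cos (c t + s)] so that [abs_RInt_Rpower_cos_le] applies. *)
Lemma fst_Cmult_e (w : C) (t : R) :
  fst (w * e_ t)%C = fst w * cos (2 * PI * t + 0) - snd w * cos (2 * PI * t + - (PI / 2)).
Proof.
  destruct w as [p q]. unfold e_. simpl.
  rewrite Rplus_0_r, cos_plus, cos_neg, sin_neg, cos_PI2, sin_PI2. ring.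
Qed.

Lemma Rabs_fst_le_Cmod (z : C) : Rabs (fst z) <= Cmod z.
Proof. eapply Rle_trans; [apply Rmax_l | apply Rmax_Cmod]. Qed.

Lemma Rabs_snd_le_Cmod (z : C) : Rabs (snd z) <= Cmod z.
Proof. eapply Rle_trans; [apply Rmax_r | apply Rmax_Cmod]. Qed.

Lemma abs_RInt_Rpower_Re_e_le (w : C) (al g d a b : R) :
  0 < a <= b -> 0 < g -> 0 <= 1 + al - g -> d <> 0 ->
  Rabs (RInt (fun x => Rpower x al * fst (w * e_ (d * Rpower x g))%C) a b)
  <= 4 * Cmod w * Rpower b (1 + al - g) / Rabs (2 * PI * d * g).
Proof.
  intros Hab Hg Hbe Hd.
  set (f s := fun x => Rpower x al * cos (2 * PI * d * Rpower x g + s)).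
  assert (Hc : 2 * PI * d <> 0) by (pose proof PI_RGT_0; apply Rmult_integral_contrapositive; split; lra).
  assert (Hf : forall s, is_RInt (f s) a b (RInt (f s) a b))
    by (intros; apply (RInt_correct (V := R_CompleteNormedModule)), ex_RInt_Rpower_cos, Hab).
  assert (Hbound : forall s, Rabs (RInt (f s) a b) <= 2 * Rpower b (1 + al - g) / Rabs (2 * PI * d * g))
    by (intros; apply abs_RInt_Rpower_cos_le; assumption).
  rewrite (RInt_ext_R _ (fun x => fst w * f 0 x - snd w * f (- (PI / 2)) x)).
  2:{ intros x _. unfold f. rewrite fst_Cmult_e, !Rmult_assoc. ring. }
  assert (Hlin : is_RInt (fun x => fst w * f 0 x - snd w * f (- (PI / 2)) x) a b
                   (fst w * RInt (f 0) a b - snd w * RInt (f (- (PI / 2))) a b))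
    by (apply (is_RInt_minus (V := R_NormedModule)); apply (is_RInt_scal (V := R_NormedModule)), Hf).
  rewrite (is_RInt_unique _ _ _ _ Hlin).
  set (B := 2 * Rpower b (1 + al - g) / Rabs (2 * PI * d * g)) in Hbound.
  replace (4 * Cmod w * Rpower b (1 + al - g) / Rabs (2 * PI * d * g)) with (Cmod w * B + Cmod w * B)
    by (unfold B, Rdiv; ring).
  eapply Rle_trans; [apply Rabs_triang|]. rewrite Rabs_Ropp, !Rabs_mult.
  apply Rplus_le_compat; apply Rmult_le_compat;
    auto using Rabs_pos, Rabs_fst_le_Cmod, Rabs_snd_le_Cmod.
Qed.

Lemma Rpower_sub_ge (g x y z : R) : 0 <= g <= 1 -> 0 < x < y -> y <= z ->
  g * (y - x) * Rpower z (g - 1) <= Rpower y g - Rpower x g.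
Proof.
  intros Hg Hxy Hyz.
  destruct (MVT_cor2 (fun t => Rpower t g) (fun t => g * Rpower t (g - 1)) x y (proj2 Hxy))
    as [c [Hmvt Hc]].
  { intros c Hc. apply derivable_pt_lim_power. lra. }
  rewrite Hmvt.
  assert (Hzc : Rpower z (g - 1) <= Rpower c (g - 1)).
  { replace (g - 1) with (- (1 - g)) by ring. rewrite !Rpower_Ropp.
    apply Rinv_le_contravar; [apply exp_pos | apply Rle_Rpower_l; lra]. }
  assert (0 <= g * (y - x)) by nra.
  replace (g * Rpower c (g - 1) * (y - x)) with (g * (y - x) * Rpower c (g - 1)) by ring.
  apply Rmult_le_compat_l; assumption.
Qed.

Lemma Rinv_Rabs_Rpower_sub_le (g x y z : R) :
  0 < g <= 1 -> 0 < x <= z -> 0 < y <= z -> x <> y ->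
  / Rabs (Rpower y g - Rpower x g) <= / g * Rpower z (1 - g) / Rabs (y - x).
Proof.
  intros Hg Hx Hy Hxy.
  assert (Hlt : forall x y, 0 < x < y -> y <= z ->
            / Rabs (Rpower y g - Rpower x g) <= / g * Rpower z (1 - g) / Rabs (y - x)).
  { clear x y Hx Hy Hxy. intros x y Hxy Hyz.
    pose proof (Rpower_sub_ge g x y z ltac:(lra) Hxy Hyz) as Hsep.
    assert (Hz : 0 < Rpower z (g - 1)) by apply exp_pos.
    assert (Hpos : 0 < g * (y - x) * Rpower z (g - 1)) by (apply Rmult_lt_0_compat; nra).
    rewrite !Rabs_pos_eq by lra.
    replace (1 - g) with (- (g - 1)) by ring. rewrite Rpower_Ropp.
    replace (/ g * / Rpower z (g - 1) / (y - x)) with (/ (g * (y - x) * Rpower z (g - 1)))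
      by (field; repeat split; lra).
    apply Rinv_le_contravar; assumption. }
  destruct (Rtotal_order x y) as [H|[H|H]]; [apply Hlt; lra | contradiction |].
  rewrite Rabs_minus_sym, (Rabs_minus_sym y). apply Hlt; lra.
Qed.

Lemma Rpower_neq_l (x y g : R) : 0 < g -> 0 < x -> 0 < y -> x <> y -> Rpower x g <> Rpower y g.
Proof.
  intros Hg Hx Hy Hxy.
  destruct (Rtotal_order x y) as [H|[H|H]]; [| contradiction |].
  - apply Rlt_not_eq, Rlt_Rpower_l; lra.
  - apply not_eq_sym, Rlt_not_eq, Rlt_Rpower_l; lra.
Qed.

Lemma Rpower_double_le (x e : R) : 0 < x -> e <= 2 -> Rpower (2 * x) e <= 4 * Rpower x e.
Proof.
  intros Hx He. rewrite <- Rpower_mult_distr by lra.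
  apply Rmult_le_compat_r; [apply Rlt_le, exp_pos|].
  replace 4 with (Rpower 2 (INR 2)) by (rewrite Rpower_pow by lra; simpl; ring).
  apply Rle_Rpower; simpl; lra.
Qed.

Definition inv_dist (m n : nat) : R := if Nat.eq_dec n m then 0 else / Rabs (INR n - INR m).

Lemma inv_dist_sym m n : inv_dist m n = inv_dist n m.
Proof.
  unfold inv_dist.
  destruct (Nat.eq_dec n m), (Nat.eq_dec m n); try lia; [reflexivity|].
  rewrite Rabs_minus_sym. reflexivity.
Qed.

(* From [ln u <= u - 1] with [u = (2j-1)/(2j+1)]. *)
Lemma Rinv_le_ln_ratio (j : R) : 1 <= j -> / j <= 2 * (ln (2 * j + 1) - ln (2 * j - 1)).
Proof.
  intros Hj.
  assert (Hratio : ln ((2 * j - 1) / (2 * j + 1)) <= (2 * j - 1) / (2 * j + 1) - 1).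
  { pose proof (exp_ineq1_le (ln ((2 * j - 1) / (2 * j + 1)))).
    rewrite exp_ln in H by (apply Rdiv_lt_0_compat; lra). lra. }
  unfold Rdiv in Hratio. rewrite ln_mult, ln_Rinv in Hratio by (try apply Rinv_0_lt_compat; lra).
  replace ((2 * j - 1) * / (2 * j + 1) - 1) with (- (2 / (2 * j + 1))) in Hratio by (field; lra).
  assert (/ j <= 4 / (2 * j + 1)).
  { apply Rmult_le_reg_l with (j * (2 * j + 1)); [nra|].
    replace (j * (2 * j + 1) * / j) with (2 * j + 1) by (field; lra).
    replace (j * (2 * j + 1) * (4 / (2 * j + 1))) with (4 * j) by (field; lra). lra. }
  lra.
Qed.

(* An antiderivative of [t |-> 1 / |t - mu|] sampled at half-integer shifts, so that by
   [Rinv_le_ln_ratio] its increments over [[n - 1, n]] dominate [inv_dist]; summing over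
   [n] then telescopes. *)
Definition inv_dist_primitive (mu t : R) : R :=
  if Rle_dec mu t then 2 * ln (2 * (t - mu) + 1) else - (2 * ln (2 * (mu - t) - 1)).

Lemma inv_dist_le_increment m n : (1 <= n)%nat ->
  inv_dist m n <= inv_dist_primitive (INR m) (INR n) - inv_dist_primitive (INR m) (INR n - 1).
Proof.
  intros Hn. unfold inv_dist, inv_dist_primitive.
  destruct (Nat.eq_dec n m) as [->|Hnm].
  - destruct (Rle_dec (INR m) (INR m)); [|lra].
    destruct (Rle_dec (INR m) (INR m - 1)); [lra|].
    replace (2 * (INR m - INR m) + 1) with 1 by ring.
    replace (2 * (INR m - (INR m - 1)) - 1) with 1 by ring. rewrite ln_1. lra.
  - destruct (Nat.lt_total n m) as [Hlt|[|Hlt]]; [|lia|].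
    + assert (Hlt' : INR (S n) <= INR m) by (apply le_INR; lia). rewrite S_INR in Hlt'.
      destruct (Rle_dec (INR m) (INR n)); [lra|].
      destruct (Rle_dec (INR m) (INR n - 1)); [lra|].
      rewrite Rabs_left, Ropp_minus_distr by lra.
      replace (2 * (INR m - (INR n - 1)) - 1) with (2 * (INR m - INR n) + 1) by ring.
      pose proof (Rinv_le_ln_ratio (INR m - INR n) ltac:(lra)). lra.
    + assert (Hlt' : INR (S m) <= INR n) by (apply le_INR; lia). rewrite S_INR in Hlt'.
      destruct (Rle_dec (INR m) (INR n)); [|lra].
      destruct (Rle_dec (INR m) (INR n - 1)); [|lra].
      rewrite Rabs_right by lra.
      replace (2 * (INR n - 1 - INR m) + 1) with (2 * (INR n - INR m) - 1) by ring.
      pose proof (Rinv_le_ln_ratio (INR n - INR m) ltac:(lra)). lra.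
Qed.

Lemma sum_inv_dist_le m N : (2 <= N)%nat -> (1 <= m <= N)%nat ->
  sum_n_m (fun n => inv_dist m n) 1 N <= 12 * ln (INR N).
Proof.
  intros HN Hm.
  eapply Rle_trans.
  { apply (sum_n_m_le_loc _ (fun n => inv_dist_primitive (INR m) (INR n)
                                    - inv_dist_primitive (INR m) (INR n - 1))).
    intros; apply inv_dist_le_increment; lia. }
  rewrite sum_n_m_1_telescope.
  assert (HmR : 1 <= INR m <= INR N) by (split; [apply (le_INR 1) | apply le_INR]; lia).
  assert (HNR : 2 <= INR N) by (apply (le_INR 2); lia).
  unfold inv_dist_primitive.
  destruct (Rle_dec (INR m) (INR N)); [|lra]. destruct (Rle_dec (INR m) 0); [lra|].
  assert (ln (2 * (INR N - INR m) + 1) <= ln (INR N ^ 3)) by (apply ln_le; nra).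
  assert (ln (2 * (INR m - 0) - 1) <= ln (INR N ^ 3)) by (apply ln_le; nra).
  rewrite ln_pow in * by lra. simpl INR in *. lra.
Qed.

Lemma kroot_nat_neq (k m n : nat) : (1 <= k)%nat -> (1 <= m)%nat -> (1 <= n)%nat -> m <> n ->
  kroot k (INR m) <> kroot k (INR n).
Proof.
  intros Hk Hm Hn Hmn. apply Rpower_neq_l.
  - apply Rinv_0_lt_compat, lt_0_INR. lia.
  - apply lt_0_INR. lia.
  - apply lt_0_INR. lia.
  - intros E. apply Hmn, INR_eq, E.
Qed.

Lemma Rinv_Rabs_kroot_sub_le (k N m n : nat) :
  (1 <= k)%nat -> (1 <= m <= N)%nat -> (1 <= n <= N)%nat -> m <> n ->
  / Rabs (kroot k (INR n) - kroot k (INR m))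
  <= INR k * Rpower (INR N) (1 - / INR k) * inv_dist m n.
Proof.
  intros Hk Hm Hn Hmn.
  assert (HkR : 1 <= INR k) by (apply (le_INR 1); lia).
  unfold inv_dist. destruct (Nat.eq_dec n m); [lia|].
  rewrite <- (Rinv_inv (INR k)) at 1.
  apply Rinv_Rabs_Rpower_sub_le.
  - split; [apply Rinv_0_lt_compat; lra | rewrite <- Rinv_1; apply Rinv_le_contravar; lra].
  - split; [apply lt_0_INR | apply le_INR]; lia.
  - split; [apply lt_0_INR | apply le_INR]; lia.
  - intros E. apply Hmn, INR_eq, E.
Qed.

Lemma Cmod_sqr (z : C) : Cmod z ^ 2 = fst z ^ 2 + snd z ^ 2.
Proof. unfold Cmod. rewrite pow2_sqrt; [reflexivity | nra]. Qed.

Lemma Cmod_sum_n_m_sqr (z : nat -> C) N :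
  Cmod (sum_n_m z 1 N) ^ 2
  = sum_n_m (fun m => sum_n_m (fun n => fst (z m * Cconj (z n))%C) 1 N) 1 N.
Proof.
  rewrite Cmod_sqr, fst_sum_n_m_1, snd_sum_n_m_1. cbn [pow].
  rewrite !Rmult_1_r, !Rmult_sum_n_m_1, <- sum_n_m_Rplus.
  apply sum_n_m_Rext; intros m _. rewrite <- sum_n_m_Rplus.
  apply sum_n_m_Rext; intros n _.
  destruct (z m), (z n). simpl. ring.
Qed.

Lemma e_mult_conj (s t : R) : (e_ s * Cconj (e_ t))%C = e_ (s - t).
Proof.
  unfold e_, Cconj, Cmult. simpl. rewrite Rmult_minus_distr_l, cos_minus, sin_minus.
  f_equal; ring.
Qed.

Definition pair_term (k : nat) (al : R) (a : nat -> C) (m n : nat) (x : R) : R :=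
  Rpower x al
  * fst (a m * Cconj (a n) * e_ (INR k * (kroot k (INR m) - kroot k (INR n)) * kroot k x))%C.

Lemma Rpower_weighted_expsum_sqr (k N : nat) (al : R) (a : nat -> C) (x : R) : 0 < x ->
  Rpower x al * Cmod (expsum k N a x) ^ 2
  = sum_n_m (fun m => sum_n_m (fun n => pair_term k al a m n x) 1 N) 1 N.
Proof.
  intros Hx. unfold expsum. rewrite Cmod_sum_n_m_sqr, <- sum_n_m_Rmult_l.
  apply sum_n_m_Rext; intros m Hm. rewrite <- sum_n_m_Rmult_l.
  apply sum_n_m_Rext; intros n Hn. unfold pair_term. f_equal. f_equal.
  rewrite Cmult_conj.
  replace (INR k * (kroot k (INR m) - kroot k (INR n)) * kroot k x)
    with (INR k * kroot k (INR m * x) - INR k * kroot k (INR n * x)).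
  - rewrite <- e_mult_conj. ring.
  - assert (0 < INR m) by (apply lt_0_INR; lia). assert (0 < INR n) by (apply lt_0_INR; lia).
    unfold kroot. rewrite <- !Rpower_mult_distr by assumption. ring.
Qed.

Lemma pair_term_diag k al a m x : pair_term k al a m m x = Cmod (a m) ^ 2 * Rpower x al.
Proof.
  unfold pair_term, e_. rewrite Rminus_diag, Rmult_0_r, !Rmult_0_l, Rmult_0_r, cos_0, sin_0, Cmod_sqr.
  destruct (a m) as [p q]. simpl. ring.
Qed.

Lemma ex_RInt_pair_term k al a m n X : 0 < X -> ex_RInt (pair_term k al a m n) X (2 * X).
Proof.
  intros HX. apply (ex_RInt_continuous (V := R_CompleteNormedModule)).
  rewrite Rmin_left, Rmax_right by lra. intros x Hx.
  apply (ex_derive_continuous (V := R_NormedModule)).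
  unfold pair_term, e_, kroot. destruct (a m * Cconj (a n))%C as [p q]. simpl.
  auto_derive. repeat split; apply ex_derive_Rpower; lra.
Qed.

Lemma RInt_pair_term_diag k al a m X : 0 <= al -> 0 < X ->
  RInt (pair_term k al a m m) X (2 * X)
  = Cmod (a m) ^ 2 * ((Rpower 2 (1 + al) - 1) / (1 + al) * Rpower X (1 + al)).
Proof.
  intros Hal HX.
  rewrite (RInt_ext_R _ (fun x => Cmod (a m) ^ 2 * Rpower x al)) by (intros; apply pair_term_diag).
  apply is_RInt_unique, (is_RInt_scal (V := R_NormedModule)).
  replace ((Rpower 2 (1 + al) - 1) / (1 + al) * Rpower X (1 + al))
    with ((Rpower (2 * X) (1 + al) - Rpower X (1 + al)) / (1 + al)).
  - apply is_RInt_Rpower; lra.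
  - rewrite <- Rpower_mult_distr by lra. field. lra.
Qed.

Lemma abs_RInt_pair_term_le (k N : nat) al a m n X :
  (2 <= k)%nat -> 0 <= al <= 1 -> 0 < X ->
  (1 <= m <= N)%nat -> (1 <= n <= N)%nat -> m <> n ->
  Rabs (RInt (pair_term k al a m n) X (2 * X))
  <= (Cmod (a m) ^ 2 + Cmod (a n) ^ 2)
     * (4 * INR k * Rpower X (1 + al - / INR k) * Rpower (INR N) (1 - / INR k)) * inv_dist m n.
Proof.
  intros Hk Hal HX Hm Hn Hmn.
  assert (HkR : 2 <= INR k) by (apply (le_INR 2); lia).
  assert (Hg : 0 < / INR k <= / 2) by (split; [apply Rinv_0_lt_compat | apply Rinv_le_contravar]; lra).
  set (be := 1 + al - / INR k).
  set (rm := kroot k (INR m)). set (rn := kroot k (INR n)).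
  assert (Hr : rm - rn <> 0) by (apply Rminus_eq_contra, kroot_nat_neq; lia).
  assert (Hdist : 0 < Rabs (rn - rm)) by (rewrite Rabs_minus_sym; apply Rabs_pos_lt, Hr).
  assert (Hgap := Rinv_Rabs_kroot_sub_le k N m n ltac:(lia) Hm Hn Hmn). fold rm rn in Hgap.
  assert (H2X : Rpower (2 * X) be <= 4 * Rpower X be) by (apply Rpower_double_le; unfold be; lra).
  eapply Rle_trans.
  { apply abs_RInt_Rpower_Re_e_le; [lra | lra | unfold be; lra |].
    apply Rmult_integral_contrapositive. split; [lra | exact Hr]. }
  fold be rm rn. rewrite Cmod_mult, Cmod_conj.
  replace (Rabs (2 * PI * (INR k * (rm - rn)) * / INR k)) with (2 * PI * Rabs (rn - rm)).
  2:{ symmetry.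
      replace (2 * PI * (INR k * (rm - rn)) * / INR k) with (2 * PI * (rm - rn)) by (field; lra).
      rewrite Rabs_mult, Rabs_pos_eq, Rabs_minus_sym by (pose proof PI_RGT_0; lra). reflexivity. }
  set (A := Cmod (a m) * Cmod (a n)).
  assert (Hamgm : 2 * A <= Cmod (a m) ^ 2 + Cmod (a n) ^ 2)
    by (pose proof (pow2_ge_0 (Cmod (a m) - Cmod (a n))); unfold A; nra).
  assert (HA : 0 <= A) by (apply Rmult_le_pos; apply Cmod_ge_0).
  assert (HPI : 2 < PI) by (pose proof PI2_3_2; lra).
  assert (HY : 0 < Rpower (2 * X) be) by apply exp_pos.
  replace (4 * A * Rpower (2 * X) be / (2 * PI * Rabs (rn - rm)))
    with (2 / PI * A * Rpower (2 * X) be * / Rabs (rn - rm)) by (field; lra).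
  replace ((Cmod (a m) ^ 2 + Cmod (a n) ^ 2)
             * (4 * INR k * Rpower X be * Rpower (INR N) (1 - / INR k)) * inv_dist m n)
    with ((Cmod (a m) ^ 2 + Cmod (a n) ^ 2) * (4 * Rpower X be)
          * (INR k * Rpower (INR N) (1 - / INR k) * inv_dist m n)) by ring.
  apply Rmult_le_compat; [| apply Rlt_le, Rinv_0_lt_compat, Hdist | | exact Hgap].
  - apply Rmult_le_pos; [apply Rmult_le_pos; [apply Rlt_le, Rdiv_lt_0_compat|] |]; lra.
  - apply Rmult_le_compat; [| lra | | exact H2X].
    + apply Rmult_le_pos; [apply Rlt_le, Rdiv_lt_0_compat |]; lra.
    + assert (2 / PI <= 1) by (apply Rmult_le_reg_r with PI; [lra | field_simplify; lra]).
      nra.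
Qed.

Lemma RInt_weighted_expsum_sqr k N al a X : 0 < X ->
  RInt (fun x => Rpower x al * Cmod (expsum k N a x) ^ 2) X (2 * X)
  = sum_n_m (fun m => sum_n_m (fun n => RInt (pair_term k al a m n) X (2 * X)) 1 N) 1 N.
Proof.
  intros HX.
  rewrite (RInt_ext_R _ (fun x => sum_n_m (fun m => sum_n_m (fun n => pair_term k al a m n x) 1 N) 1 N)).
  - apply is_RInt_unique, is_RInt_sum_n_m_1; intros m _.
    apply is_RInt_sum_n_m_1; intros n _.
    apply (RInt_correct (V := R_CompleteNormedModule)), ex_RInt_pair_term, HX.
  - rewrite Rmin_left, Rmax_right by lra. intros x Hx.
    apply Rpower_weighted_expsum_sqr. lra.
Qed.

Lemma l2mass_mult_as_diag (N : nat) (a : nat -> C) (c : R) :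
  l2mass N a * c
  = sum_n_m (fun m => sum_n_m (fun n => if Nat.eq_dec n m then Cmod (a m) ^ 2 * c else 0) 1 N) 1 N.
Proof.
  unfold l2mass. rewrite Rmult_comm, <- sum_n_m_Rmult_l.
  apply sum_n_m_Rext; intros m Hm. rewrite sum_n_m_1_delta by exact Hm. ring.
Qed.

Lemma abs_RInt_pair_term_sub_diag_le (k N : nat) al a m n X :
  (2 <= k)%nat -> 0 <= al <= 1 -> 0 < X -> (1 <= m <= N)%nat -> (1 <= n <= N)%nat ->
  Rabs (RInt (pair_term k al a m n) X (2 * X)
        - if Nat.eq_dec n m
          then Cmod (a m) ^ 2 * ((Rpower 2 (1 + al) - 1) / (1 + al) * Rpower X (1 + al))
          else 0)
  <= (Cmod (a m) ^ 2 + Cmod (a n) ^ 2)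
     * (4 * INR k * Rpower X (1 + al - / INR k) * Rpower (INR N) (1 - / INR k) * inv_dist m n).
Proof.
  intros Hk Hal HX Hm Hn.
  destruct (Nat.eq_dec n m) as [->|Hnm].
  - rewrite RInt_pair_term_diag, Rminus_diag, Rabs_R0 by lra.
    unfold inv_dist. destruct (Nat.eq_dec m m); [|lia]. right; ring.
  - rewrite Rminus_0_r, <- Rmult_assoc. apply abs_RInt_pair_term_le; auto.
Qed.

Theorem lemma3p1 :
  forall (k : nat) (alpha : R),
    (2 <= k)%nat -> 0 <= alpha <= 1 ->
    exists Cst : R,
      forall (N : nat) (X : R) (a : nat -> C),
        (2 <= N)%nat -> 1 <= X ->
        Rabs (RInt (fun x => Rpower x alpha * (Cmod (expsum k N a x)) ^ 2) X (2 * X)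
              - l2mass N a *
                ((Rpower 2 (1 + alpha) - 1) / (1 + alpha) * Rpower X (1 + alpha)))
        <= Cst * l2mass N a
               * (Rpower X (1 + alpha - / INR k) * Rpower (INR N) (1 - / INR k) * ln (INR N)).
Proof.
  intros k al Hk Hal. exists (96 * INR k). intros N X a HN HX.
  set (K := 4 * INR k * Rpower X (1 + al - / INR k) * Rpower (INR N) (1 - / INR k)).
  assert (HK : 0 <= K).
  { pose proof (exp_pos ((1 + al - / INR k) * ln X)). pose proof (exp_pos ((1 - / INR k) * ln (INR N))).
    assert (0 <= INR k) by apply pos_INR. unfold K, Rpower. apply Rmult_le_pos; [|lra].
    apply Rmult_le_pos; lra. }
  rewrite RInt_weighted_expsum_sqr, l2mass_mult_as_diag, <- sum_n_m_Rminus by lra.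
  eapply Rle_trans; [apply sum_n_m_Rabs_le|].
  eapply Rle_trans.
  { apply sum_n_m_le_loc; intros m Hm. rewrite <- sum_n_m_Rminus.
    eapply Rle_trans; [apply sum_n_m_Rabs_le|].
    apply sum_n_m_le_loc; intros n Hn. apply (abs_RInt_pair_term_sub_diag_le k N); lia || lra. }
  eapply Rle_trans.
  { apply (sum_n_m_1_pair_sym_le (fun m => Cmod (a m) ^ 2) (fun m n => K * inv_dist m n)
             (K * (12 * ln (INR N)))).
    - intros m n. rewrite inv_dist_sym. reflexivity.
    - intros m. apply pow2_ge_0.
    - intros m Hm. rewrite sum_n_m_Rmult_l. apply Rmult_le_compat_l; [exact HK|].
      apply sum_inv_dist_le; assumption. }
  right. unfold K, l2mass. ring.
Qed.
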